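(* Let $H$ be a finite connected graph. Then $H$ is $1$-guardable in every finite connected graph $G$ that contains $H$ as an isometric subgraph if and only if $H$ is a Helly graph.
   Context: All graphs are finite, simple and connected. $d_G(x,y)$ denotes the distance in $G$. A subgraph $H$ of $G$ is isometric if $d_H(x,y)=d_G(x,y)$ for all $x,y\in V(H)$. For $u\in V(G)$ and an integer $k\ge 0$, $N^k[u]=\{y\in V(G): d(u,y)\le k\}$. A family $\mathcal S$ of sets has the Helly property if for every subfamily $\mathcal T\subseteq\mathcal S$ whose members pairwise intersect, $\bigcap\mathcal T\neq\varnothing$. A graph is a Helly graph if the family $\{N^k[u]: u\in V(G), k\ge 0\}$ has the Helly property. Cops and robber game on $G$: the cops first choose starting vertices, then the robber chooses his; then they alternate turns, each player in his turn moving each of his pieces to an adjacent vertex or leaving it in place; the cops capture the robber when a cop occupies the robber's vertex. For an isometric subgraph $H$ of $G$ and $k\ge1$, $H$ is $k$-guardable (in $G$) if $k$ cops have a strategy such that after finitely many moves the $k$ cops are on vertices of $H$ and from then on always stay in $H$, and whenever the robber enters $H$ he is captured by one of these cops in the next turn. *)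

From mathcomp Require Import all_boot.
Set Implicit Arguments. Unset Strict Implicit. Unset Printing Implicit Defensive.

Section Graphs.
Variables (V : finType) (e : rel V).

Definition simple_graph : Prop := symmetric e /\ irreflexive e.

Definition connected_graph : Prop :=
  simple_graph /\ 0 < #|V| /\ forall x y : V, connect e x y.

Fixpoint ball (k : nat) (u : V) : {set V} :=
  match k with
  | 0 => [set u]
  | k'.+1 => ball k' u :|: [set y | [exists z in ball k' u, e z y]]
  end.

(* d(x,y) = least k with y in N^k[x]; in a connected graph it is < #|V|. *)
Definition dist (x y : V) : nat := find (fun k => y \in ball k x) (iota 0 #|V|).

Definition helly : Prop :=
  forall F : {set {set V}},
    (forall B, B \in F -> exists (u : V) (k : nat), B = ball k u) ->
    (forall B1 B2, B1 \in F -> B2 \in F -> exists x, (x \in B1) && (x \in B2)) ->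
    exists x, forall B, B \in F -> x \in B.

Definition adj_or_eq (x y : V) : bool := (x == y) || e x y.

(* Timeline of a play: c 0, r 0, c 1, r 1, ... (cop position c t, then robber r t). *)
Definition hist (c r : nat -> V) (t : nat) : seq (V * V) :=
  [seq (c s, r s) | s <- iota 0 t.+1].

(* the game is still running when the cop stands at c t (robber not yet moved) *)
Definition alive_c (c r : nat -> V) (t : nat) : Prop :=
  forall s, s < t -> c s <> r s /\ c s.+1 <> r s.

(* the game is still running after the robber's move to r t *)
Definition alive_r (c r : nat -> V) (t : nat) : Prop :=
  alive_c c r t /\ c t <> r t.

Definition guardable1 (S : {set V}) : Prop :=
  exists (c0 : V) (sigma : seq (V * V) -> V),
    forall c r : nat -> V,
      c 0 = c0 ->
      (forall t, c t.+1 = sigma (hist c r t)) ->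
      (forall t, adj_or_eq (r t) (r t.+1)) ->
      (forall t, alive_r c r t -> adj_or_eq (c t) (c t.+1)) /\
      exists T, forall t, T <= t ->
        (alive_c c r t -> c t \in S) /\
        (alive_r c r t -> r t \in S -> c t.+1 = r t).

End Graphs.

Definition isometric_embedding (VH VG : finType) (eH : rel VH) (eG : rel VG)
  (f : VH -> VG) : Prop :=
  injective f /\ (forall x y, eH x y -> eG (f x) (f y)) /\
  (forall x y, dist eG (f x) (f y) = dist eH x y).

(* A cop on a Helly graph [H] keeps, at round [t] and for every vertex [h],
   [d(x, h) <= max(|H| - t - 1, d_G(r, f h)) + 1], where [x] is his position and [r]
   the robber's. Then [N^1[x]] and the balls [N^max(|H| - t - 1, d_G(r, f h))[h]]
   pairwise intersect, and a common point is his next position; after [|H|] rounds a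
   robber entering [H] at [f h] is caught at once.
   Conversely, let balls [N^k[u]] of [H] pairwise intersect with empty intersection,
   so that [excess x = max (d(u, x) - k)] is positive. Embed [H] by [h |-> d(h, -)]
   into four copies of the sup-metric graph on bounded functions [H -> nat], linked
   along 4-cycles; on such a cycle the robber can always step out of reach. He walks
   in another copy to [excess + 1], comes down to the copy containing [H], and from
   there (possibly after one more step) some centre [u] is strictly closer to him, in the sup
   metric, than to the cop. Walking straight to [d(u, -)] he enters [H] uncaught. *)

From mathcomp Require Import all_boot zify.
Set Implicit Arguments. Unset Strict Implicit. Unset Printing Implicit Defensive.

Section Balls.
Variables (V : finType) (e : rel V).

Lemma ball_center k u : u \in ball e k u.
Proof. by elim: k => [|k IH]; rewrite /= !inE ?IH. Qed.

Lemma subset_ballS k u : ball e k u \subset ball e k.+1 u.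
Proof. exact: subsetUl. Qed.

Lemma subset_ball k k' u : k <= k' -> ball e k u \subset ball e k' u.
Proof.
move/subnK <-; elim: (k' - k) => [|n IH] //.
exact: subset_trans IH (subset_ballS _ _).
Qed.

Lemma mem_ballS_edge k u z y : z \in ball e k u -> e z y -> y \in ball e k.+1 u.
Proof.
by move=> hz hzy; rewrite /= !inE; apply/orP; right; apply/existsP; exists z; rewrite hz.
Qed.

Lemma ballS_inv k u y :
  y \in ball e k.+1 u -> y \in ball e k u \/ exists2 z, z \in ball e k u & e z y.
Proof. by rewrite /= !inE => /orP [->|/existsP [z /andP [hz hzy]]]; [left|right; exists z]. Qed.

Lemma mem_ball1 x y : e x y -> y \in ball e 1 x.
Proof. exact/mem_ballS_edge/ball_center. Qed.

Lemma mem_ball_trans a b x y z :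
  y \in ball e a x -> z \in ball e b y -> z \in ball e (a + b) x.
Proof.
move=> hy; elim: b z => [|b IH] z; first by rewrite inE addn0 => /eqP ->.
rewrite addnS => /ballS_inv [/IH /(subsetP (subset_ballS _ _)) //|[w /IH hw]].
exact: mem_ballS_edge.
Qed.

Lemma ball_split a b x y :
  y \in ball e (a + b) x -> exists2 w, w \in ball e a x & y \in ball e b w.
Proof.
elim: b y => [|b IH] y; first by rewrite addn0 => hy; exists y; rewrite ?ball_center.
rewrite addnS => /ballS_inv [/IH [w hw /(subsetP (subset_ballS _ _))]|[z /IH [w hw hz] hzy]].
  by exists w.
by exists w; last exact: mem_ballS_edge hz hzy.
Qed.

Lemma lipschitz_ball (phi : V -> nat) : (forall x y, e x y -> phi y <= phi x + 1) ->
  forall k x y, y \in ball e k x -> phi y <= phi x + k.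
Proof.
move=> hphi; elim=> [|k IH] x y; first by rewrite inE addn0 => /eqP ->.
by case/ballS_inv => [/IH|[z /IH hz /hphi]]; lia.
Qed.

Lemma path_ball x p : path e x p -> last x p \in ball e (size p) x.
Proof.
elim: p x => [|z p IH] x /=; first by rewrite inE.
by case/andP => /mem_ball1 hxz /IH; apply: (mem_ball_trans (a := 1)) hxz.
Qed.

Lemma connect_ball x y : connect e x y -> y \in ball e #|V|.-1 x.
Proof.
case/connectP => p /shortenP [p' hp' /card_uniqP hsize _] ->.
apply: subsetP (subset_ball _ _) _ (path_ball hp').
by have := max_card (mem (x :: p')); rewrite hsize /=; lia.
Qed.

End Balls.

Lemma ball_homo (V V' : finType) (e : rel V) (e' : rel V') (f : V -> V') :
  (forall x y, e x y -> e' (f x) (f y)) ->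
  forall k x y, y \in ball e k x -> f y \in ball e' k (f x).
Proof.
move=> hf; elim=> [|k IH] x y; first by rewrite !inE => /eqP ->.
case/ballS_inv => [/IH /(subsetP (subset_ballS e' _ _)) //|[z /IH hz /hf]].
exact: mem_ballS_edge.
Qed.

Section Distance.
Variables (V : finType) (e : rel V).
Local Notation dist := (dist e).

Lemma dist_le_card x y : dist x y <= #|V|.
Proof. by rewrite /dist -[leqRHS](size_iota 0) find_size. Qed.

Hypothesis e_connected : forall x y : V, connect e x y.

Lemma dist_leE k x y : (dist x y <= k) = (y \in ball e k x).
Proof.
have hhas : has (fun k => y \in ball e k x) (iota 0 #|V|).
  apply/hasP; exists #|V|.-1; last exact: connect_ball.
  by rewrite mem_iota add0n prednK ?leqnn //; apply/card_gt0P; exists x.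
have hlt : dist x y < #|V| by rewrite -[ltnRHS](size_iota 0) -has_find.
have hd : y \in ball e (dist x y) x.
  by have := nth_find 0 hhas; rewrite nth_iota.
apply/idP/idP => [hle|hk]; first exact: subsetP (subset_ball _ _ hle) _ hd.
rewrite leqNgt; apply/negP => hlt2.
by have := before_find 0 hlt2; rewrite nth_iota ?hk //; apply: ltn_trans hlt2 hlt.
Qed.

Lemma dist_xx x : dist x x = 0.
Proof. by apply/eqP; rewrite -leqn0 dist_leE ball_center. Qed.

Lemma dist_eq0 x y : dist x y = 0 -> x = y.
Proof. by move=> h; move: (leqnn 0); rewrite -{1}h dist_leE inE => /eqP. Qed.

Lemma dist_triangle x y z : dist x z <= dist x y + dist y z.
Proof. by rewrite dist_leE; apply: mem_ball_trans; rewrite -dist_leE. Qed.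

Lemma dist_edge x y : e x y -> dist x y <= 1.
Proof. by rewrite dist_leE; apply: mem_ball1. Qed.

Lemma dist_le1 x y : dist x y <= 1 -> x = y \/ e x y.
Proof. by rewrite dist_leE => /ballS_inv [|[z]]; rewrite inE => /eqP ->; [left|right]. Qed.

Lemma dist_split a b x y :
  dist x y <= a + b -> exists2 w, dist x w <= a & dist w y <= b.
Proof. by rewrite dist_leE => /ball_split [w]; exists w; rewrite dist_leE. Qed.

Lemma lipschitz_dist (phi : V -> nat) : (forall x y, e x y -> phi y <= phi x + 1) ->
  forall x y, phi y <= phi x + dist x y.
Proof. by move=> h x y; apply: lipschitz_ball h _ _ _ _; rewrite -dist_leE. Qed.

Hypothesis e_sym : symmetric e.

Lemma distC x y : dist x y = dist y x.
Proof.
have le_sym u v : dist v u <= dist u v.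
  have := @lipschitz_dist (dist^~ u) _ u v; rewrite dist_xx; apply=> a b hab.
  by apply: leq_trans (dist_triangle b a u) _; rewrite addnC leq_add2l dist_edge // e_sym.
by apply/eqP; rewrite eqn_leq !le_sym.
Qed.

End Distance.

Lemma dist_homo (V V' : finType) (e : rel V) (e' : rel V') (f : V -> V') :
  (forall x y, connect e x y) -> (forall x y, connect e' x y) ->
  (forall x y, e x y -> e' (f x) (f y)) -> forall x y, dist e' (f x) (f y) <= dist e x y.
Proof.
move=> he he' hf x y; rewrite (dist_leE he'); apply: ball_homo hf _ _ _ _.
by rewrite -(dist_leE he).
Qed.

Lemma hist_size (V : finType) (c r : nat -> V) t : size (hist c r t) = t.+1.
Proof. by rewrite size_map size_iota. Qed.

Lemma hist_last (V : finType) (c r : nat -> V) t d : last d (hist c r t) = (c t, r t).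
Proof. by rewrite -nth_last hist_size (nth_map 0) ?size_iota // nth_iota. Qed.

Lemma hist_rcons (V : finType) (c r : nat -> V) t :
  hist c r t.+1 = rcons (hist c r t) (c t.+1, r t.+1).
Proof. by rewrite /hist -addn1 iotaD map_cat cats1. Qed.

Lemma adj_or_eq_dist (V : finType) (e : rel V) x y :
  (forall x y, connect e x y) -> adj_or_eq e x y -> dist e x y <= 1.
Proof. by move=> hc /orP [/eqP ->|/(dist_edge hc) //]; rewrite dist_xx. Qed.

Section HellyStep.
Variables (V : finType) (e : rel V).
Hypotheses (e_connected : forall x y : V, connect e x y) (e_sym : symmetric e).
Local Notation dist := (dist e).

Lemma balls_meet a b u v :
  dist u v <= a + b -> exists x, (x \in ball e a u) && (x \in ball e b v).
Proof.
case/(dist_split e_connected) => w hw hwv; exists w.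
by rewrite -!(dist_leE e_connected) hw (distC e_connected e_sym).
Qed.

Lemma helly_step (x : V) (rad : V -> nat) : helly e ->
  (forall h, dist x h <= (rad h).+1) -> (forall h h', dist h h' <= rad h + rad h') ->
  exists w, dist x w <= 1 /\ forall h, dist w h <= rad h.
Proof.
move=> he hx hh; pose F := ball e 1 x |: [set ball e (rad h) h | h in V].
have F_inv B : B \in F -> B = ball e 1 x \/ exists h, B = ball e (rad h) h.
  by rewrite !inE => /orP [/eqP ->|/imsetP [h _ ->]]; [left|right; exists h].
have [w hw] : exists w, forall B, B \in F -> w \in B.
  apply: he => [B /F_inv [->|[h ->]]|B1 B2 /F_inv [->|[h1 ->]] /F_inv [->|[h2 ->]]].
  - by exists x, 1.
  - by exists h, (rad h).
  - by exists x; rewrite ball_center.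
  - by apply: balls_meet; rewrite add1n.
  - by apply: balls_meet; rewrite (distC e_connected e_sym) addn1.
  - exact: balls_meet.
exists w; split; first by rewrite (dist_leE e_connected) hw // !inE eqxx.
move=> h; rewrite (distC e_connected e_sym) (dist_leE e_connected) hw //.
by rewrite !inE; apply/orP; right; apply/imsetP; exists h.
Qed.

End HellyStep.

Section HellyCop.
Variables (VH VG : finType) (eH : rel VH) (eG : rel VG) (f : VH -> VG).
Hypotheses (HH : connected_graph eH) (HG : connected_graph eG).
Hypotheses (Hf : isometric_embedding eH eG f) (helly_H : helly eH).
Variable x0 : VH.

Let conH := HH.2.2.
Let conG := HG.2.2.

Definition cop_radius (r : VG) (t : nat) (h : VH) := maxn (#|VH| - t.+1) (dist eG r (f h)).

Definition cop_next (x : VH) (r : VG) (t : nat) : VH :=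
  odflt x [pick w | (dist eH x w <= 1) && [forall h, dist eH w h <= cop_radius r t h]].

Lemma cop_next_spec x r t : (forall h, dist eH x h <= (cop_radius r t h).+1) ->
  dist eH x (cop_next x r t) <= 1 /\ forall h, dist eH (cop_next x r t) h <= cop_radius r t h.
Proof.
move=> hx; have [|w [hxw hw]] := helly_step conH HH.1.1 helly_H hx.
  move=> h h'; rewrite -Hf.2.2; apply: leq_trans (dist_triangle conG _ r _) _.
  by rewrite (distC conG HG.1.1) leq_add // leq_maxr.
rewrite /cop_next; case: pickP => [y /andP [hxy /forallP //]|/(_ w)].
by rewrite hxw; move/negbT/forallPn => [h]; rewrite hw.
Qed.

Lemma cop_radiusS r r' t h :
  adj_or_eq eG r r' -> cop_radius r t h <= (cop_radius r' t.+1 h).+1.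
Proof.
move=> /(adj_or_eq_dist conG) hrr'; have := dist_triangle conG r r' (f h).
by rewrite /cop_radius; lia.
Qed.

Definition finv (c : VG) : VH := odflt x0 [pick x | f x == c].

Lemma finvK : cancel f finv.
Proof. by move=> x; rewrite /finv; case: pickP => [y /eqP /Hf.1 //|/(_ x)]; rewrite eqxx. Qed.

Definition cop_strategy (hs : seq (VG * VG)) : VG :=
  let: (c, r) := last (f x0, f x0) hs in f (cop_next (finv c) r (size hs).-1).

Lemma helly_guardable1 : guardable1 eG [set f x | x in VH].
Proof.
exists (f x0), cop_strategy => c r c0 cS radj.
have c_next t : c t.+1 = f (cop_next (finv (c t)) (r t) t).
  by rewrite cS /cop_strategy hist_last hist_size.
have inv t : exists x, c t = f x /\ forall h, dist eH x h <= (cop_radius (r t) t h).+1.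
  elim: t => [|t [x [cx hx]]].
    by exists x0; split => // h; apply: leq_trans (dist_le_card _ _ _) _; rewrite /cop_radius; lia.
  exists (cop_next x (r t) t); rewrite c_next cx finvK; split=> // h.
  by apply: leq_trans ((cop_next_spec hx).2 h) (cop_radiusS _ _ (radj t)).
split=> [t _|].
  have [x [cx /cop_next_spec [/(dist_le1 conH) hxw _]]] := inv t.
  rewrite c_next cx finvK /adj_or_eq; case: hxw => [<-|/Hf.2.1 ->]; first by rewrite eqxx.
  exact: orbT.
exists #|VH| => t hKt; have [x [cx hx]] := inv t; split=> [_|_ /imsetP [h0 _ rh0]].
  by rewrite cx imset_f.
have := (cop_next_spec hx).2 h0.
rewrite /cop_radius rh0 (dist_xx conG) maxn0 (_ : #|VH| - t.+1 = 0); last by lia.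
rewrite leqn0 => /eqP /(dist_eq0 conH) <-; by rewrite c_next cx finvK rh0.
Qed.

End HellyCop.

Section NonHelly.
Variables (VH : finType) (eH : rel VH).
Hypothesis HH : connected_graph eH.
Let conH := HH.2.2.
Local Notation d := (dist eH).
Let dC x y : d x y = d y x := distC conH HH.1.1 x y.
Let d_tri x y z : d x z <= d x y + d y z := dist_triangle conH x y z.

(* The bound leaves room for [excess + 1] and for distances in [H]. *)
Definition profile := {ffun VH -> 'I_#|VH|.+3}.

Definition mkprofile (g : VH -> nat) : profile := [ffun x => inord (g x)].

Lemma mkprofileE (g : VH -> nat) x : g x <= #|VH|.+2 -> mkprofile g x = g x :> nat.
Proof. by move=> hg; rewrite ffunE inordK. Qed.

Lemma profile_le (p : profile) x : p x <= #|VH|.+2.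
Proof. by rewrite -ltnS. Qed.

Definition pdist (p q : profile) := \max_x maxn (p x - q x) (q x - p x).

Lemma pdist_leP (p q : profile) n :
  reflect (forall x, p x <= q x + n /\ q x <= p x + n) (pdist p q <= n).
Proof.
apply: (iffP (bigmax_leqP _ _ _)) => h x; have := h x; first by move/(_ isT); lia.
by lia.
Qed.

Lemma leq_pdist (p q : profile) x : p x <= q x + pdist p q /\ q x <= p x + pdist p q.
Proof. by move: x; apply/pdist_leP. Qed.

Lemma pdistC (p q : profile) : pdist p q = pdist q p.
Proof.
by apply/eqP; rewrite eqn_leq; apply/andP; split; apply/pdist_leP => x;
  [have := leq_pdist q p x|have := leq_pdist p q x]; lia.
Qed.

Lemma pdist_triangle (p q s : profile) : pdist p s <= pdist p q + pdist q s.
Proof. by apply/pdist_leP => x; have := leq_pdist p q x; have := leq_pdist q s x; lia. Qed.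

Lemma pdist_xx (p : profile) : pdist p p = 0.
Proof. by apply/eqP; rewrite -leqn0; apply/pdist_leP => x; lia. Qed.

Lemma pdist_eq0 (p q : profile) : pdist p q = 0 -> p = q.
Proof. by move=> h; apply/ffunP => x; apply: ord_inj; have := leq_pdist p q x; rewrite h; lia. Qed.

Definition dprof (h : VH) : profile := mkprofile (d h).

Lemma dprofE h x : dprof h x = d h x :> nat.
Proof. by rewrite mkprofileE //; have := dist_le_card eH h x; lia. Qed.

Lemma dist_le_pdist a h : d a h <= pdist (dprof a) (dprof h).
Proof. by have := leq_pdist (dprof a) (dprof h) h; rewrite !dprofE (dist_xx conH); lia. Qed.

Lemma leq_pdist_dprof a (p : profile) : p a <= pdist (dprof a) p.
Proof. by have := leq_pdist (dprof a) p a; rewrite dprofE (dist_xx conH); lia. Qed.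

Lemma dprof_inj : injective dprof.
Proof. by move=> a b hab; apply: (dist_eq0 conH); rewrite -dprofE hab dprofE (dist_xx conH). Qed.

(* Clamps [p] into the sup-ball of radius [pdist p q - 1] around [q]. *)
Definition step (p q : profile) : profile :=
  let D := (pdist p q).-1 in mkprofile (fun x => maxn (q x - D) (minn (p x) (q x + D))).

Lemma stepE (p q : profile) x :
  step p q x = maxn (q x - (pdist p q).-1) (minn (p x) (q x + (pdist p q).-1)) :> nat.
Proof. by rewrite mkprofileE //; have := profile_le p x; have := profile_le q x; lia. Qed.

Lemma pdist_step (p q : profile) : pdist p (step p q) <= 1.
Proof. by apply/pdist_leP => x; rewrite stepE; have := leq_pdist p q x; lia. Qed.

Lemma pdist_step_target (p q : profile) : pdist (step p q) q <= (pdist p q).-1.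
Proof. by apply/pdist_leP => x; rewrite stepE; lia. Qed.

Lemma step_neq (p q : profile) : p != q -> step p q != p.
Proof.
move=> hpq; have : pdist p q != 0 by apply: contra hpq => /eqP /pdist_eq0 ->.
by apply: contra_neq => hs; have := pdist_step_target p q; rewrite hs; lia.
Qed.

Definition l0 : 'I_4 := @Ordinal 4 0 isT.
Definition l1 : 'I_4 := @Ordinal 4 1 isT.
Definition l2 : 'I_4 := @Ordinal 4 2 isT.
Definition l3 : 'I_4 := @Ordinal 4 3 isT.

Lemma layer_cases (z : 'I_4) : [\/ z = l0, z = l1, z = l2 | z = l3].
Proof.
by case: z => [[|[|[|[|n]]]] hz] //; [apply: Or41|apply: Or42|apply: Or43|apply: Or44];
  apply: val_inj.
Qed.

Definition ladj (a b : 'I_4) := (ordS a == b) || (ordS b == a).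

Lemma ladj_irr a : ladj a a = false.
Proof. by case: (layer_cases a) => ->. Qed.

Definition cyl := (profile * 'I_4)%type.

Definition cyl_edge (u v : cyl) : bool :=
  ((u.1 == v.1) && ladj u.2 v.2) || [&& u.2 == v.2, u.1 != v.1 & pdist u.1 v.1 <= 1].

Definition cyl_embed (h : VH) : cyl := (dprof h, l0).

Lemma cyl_adjE p a q b :
  adj_or_eq cyl_edge (p, a) (q, b) = ((a == b) && (pdist p q <= 1)) || ((p == q) && ladj a b).
Proof.
rewrite /adj_or_eq /cyl_edge /= xpair_eqE.
by case: (eqVneq p q) => [->|]; case: (a == b); rewrite ?pdist_xx ?andbT ?andbF ?orbF ?orbT.
Qed.

Lemma cyl_edge_sym : symmetric cyl_edge.
Proof.
have ladjC : symmetric ladj by move=> a b; rewrite /ladj orbC.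
by move=> u v; rewrite /cyl_edge eq_sym ladjC pdistC [v.2 == _]eq_sym [v.1 == _]eq_sym.
Qed.

Lemma cyl_edge_irr : irreflexive cyl_edge.
Proof. by move=> [p z]; rewrite /cyl_edge !eqxx ladj_irr. Qed.

Lemma connect_layer p q z : connect cyl_edge (p, z) (q, z).
Proof.
move: {2}(pdist p q) (leqnn (pdist p q)) => n; elim: n p => [|n IH] p hn.
  by move: hn; rewrite leqn0 => /eqP /pdist_eq0 ->.
have [->//|hpq] := eqVneq p q.
apply: connect_trans (IH (step p q) _); last by have := pdist_step_target p q; lia.
apply/connect1/orP; right; apply/and3P; split; first exact: eqxx.
  by rewrite eq_sym step_neq.
exact: pdist_step.
Qed.

Lemma connect_vertical p z : connect cyl_edge (p, z) (p, l0).
Proof.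
have e10 : cyl_edge (p, l1) (p, l0) by rewrite /cyl_edge eqxx.
have e21 : cyl_edge (p, l2) (p, l1) by rewrite /cyl_edge eqxx.
have e30 : cyl_edge (p, l3) (p, l0) by rewrite /cyl_edge eqxx.
case: (layer_cases z) => ->; first exact: connect0.
- exact: connect1.
- exact: connect_trans (connect1 e21) (connect1 e10).
- exact: connect1.
Qed.

Lemma cyl_connected : connected_graph cyl_edge.
Proof.
split; first exact: (conj cyl_edge_sym cyl_edge_irr).
split=> [|[p a] [q b]].
  by have /card_gt0P [x _] := HH.2.1; apply/card_gt0P; exists (dprof x, l0).
apply: connect_trans (connect_vertical p a) _; apply: connect_trans (connect_layer p q l0) _.
by rewrite (sym_connect_sym cyl_edge_sym) connect_vertical.
Qed.

Lemma cyl_embed_edge x y : eH x y -> cyl_edge (cyl_embed x) (cyl_embed y).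
Proof.
move=> hxy; have hne : x != y by apply: contraTneq hxy => ->; rewrite HH.1.2.
rewrite /cyl_edge /= (inj_eq dprof_inj) (negbTE hne) /=; apply/pdist_leP => z.
rewrite !dprofE; have := dist_edge conH hxy; have := d_tri x y z.
by have := d_tri y x z; rewrite (dC y x); lia.
Qed.

Lemma cyl_embed_isometric : isometric_embedding eH cyl_edge cyl_embed.
Proof.
split; first by move=> a b [] /dprof_inj.
split=> [|x y]; first exact: cyl_embed_edge.
apply/eqP; rewrite eqn_leq (dist_homo conH cyl_connected.2.2 cyl_embed_edge) /=.
(* Evaluation at [x] is 1-Lipschitz along cylinder edges. *)
pose phi (v : cyl) := v.1 x : nat.
have hphi u v : cyl_edge u v -> phi v <= phi u + 1.
  rewrite /phi /cyl_edge => /orP [/andP [/eqP -> _]|/and3P [_ _ /pdist_leP /(_ x)]]; lia.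
have := lipschitz_dist cyl_connected.2.2 hphi (cyl_embed x) (cyl_embed y).
by rewrite /phi /= !dprofE (dist_xx conH) add0n dC.
Qed.

Section Family.
Variable F : {set {set VH}}.
Hypothesis F_balls : forall B, B \in F -> exists (u : VH) (k : nat), B = ball eH k u.
Hypothesis F_meet : forall B1 B2, B1 \in F -> B2 \in F -> exists x, (x \in B1) && (x \in B2).
Hypothesis F_not_helly : forall x, exists2 B, B \in F & x \notin B.

(* Radii beyond [#|VH|] all give the whole vertex set, so they are capped there. *)
Definition Fballs : {set VH * 'I_#|VH|.+1} :=
  [set uk : VH * 'I_#|VH|.+1 | ball eH uk.2 uk.1 \in F].

Definition excess (x : VH) : nat := \max_(uk in Fballs) (d uk.1 x - uk.2).

Lemma Fballs_of B : B \in F -> exists2 uk, uk \in Fballs & B = ball eH uk.2 uk.1.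
Proof.
move=> hB; have [u [k hk]] := F_balls hB.
have hcap : ball eH k u = ball eH (minn k #|VH|) u.
  apply/setP => y; rewrite -!(dist_leE conH).
  by have := dist_le_card eH u y; move=> hy; apply/idP/idP; lia.
have hm : minn k #|VH| < #|VH|.+1 by rewrite ltnS geq_minr.
exists (u, Ordinal hm); first by rewrite inE /= -hcap -hk.
by rewrite hk hcap.
Qed.

Lemma Fballs_meet uk uk' : uk \in Fballs -> uk' \in Fballs -> d uk.1 uk'.1 <= uk.2 + uk'.2.
Proof.
rewrite !inE => h1 h2; have [x /andP []] := F_meet h1 h2.
rewrite -!(dist_leE conH) => hx1 hx2.
by apply: leq_trans (d_tri _ x _) _; rewrite (dC x) leq_add.
Qed.

Lemma Fballs_miss x : exists2 uk, uk \in Fballs & uk.2 < d uk.1 x.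
Proof.
have [B hB hxB] := F_not_helly x; have [uk huk hBuk] := Fballs_of hB.
by exists uk => //; move: hxB; rewrite hBuk -(dist_leE conH) -ltnNge.
Qed.

Lemma Fball_radius_gt0 uk : uk \in Fballs -> 0 < uk.2.
Proof.
move=> huk; have [uk' huk' hlt] := Fballs_miss uk.1.
by have := Fballs_meet huk' huk; lia.
Qed.

Lemma dist_le_excess uk x : uk \in Fballs -> d uk.1 x <= excess x + uk.2.
Proof.
move=> huk; have : d uk.1 x - uk.2 <= excess x by apply: leq_bigmax_cond huk.
lia.
Qed.

Lemma excess_le uk x : uk \in Fballs -> excess x <= d uk.1 x + uk.2.
Proof.
move=> huk; apply/bigmax_leqP => uk' huk'.
by have := Fballs_meet huk' huk; have := d_tri uk'.1 uk.1 x; lia.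
Qed.

Lemma excess_le_card x : excess x <= #|VH|.
Proof. by apply/bigmax_leqP => uk _; have := dist_le_card eH uk.1 x; lia. Qed.

Lemma excess_gt0 x : 0 < excess x.
Proof. by have [uk huk hlt] := Fballs_miss x; have := dist_le_excess x huk; lia. Qed.

(* [far x = excess x + 1 >= 2]: a cop on [H] never reaches [(far, l0)]. *)
Definition far : profile := mkprofile (fun x => (excess x).+1).

Lemma farE x : far x = (excess x).+1 :> nat.
Proof. by rewrite mkprofileE //; have := excess_le_card x; lia. Qed.

(* Raising [excess] to 2 around the cop keeps the robber out of reach while staying
   within [k] of [dprof u] for every ball [N^k[u]] of [F]; as no vertex lies in all
   of them, one of these centres is a target. *)
Definition ambush (q : profile) : profile := mkprofile (fun x => maxn (excess x) (2 - q x)).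

Lemma ambushE q x : ambush q x = maxn (excess x) (2 - q x) :> nat.
Proof. by rewrite mkprofileE //; have := excess_le_card x; lia. Qed.

Lemma pdist_far_ambush q : pdist far (ambush q) <= 1.
Proof. by apply/pdist_leP => x; rewrite farE ambushE; have := excess_gt0 x; lia. Qed.

(* The robber at [p] is strictly closer to [h] than a cop with distance profile [q]. *)
Definition target (p q : profile) (h : VH) := pdist p (dprof h) < q h.

(* Heading for the nearest target makes the distance to the current target drop
   even when the nearest target changes. *)
Definition attack (p q : profile) : option profile :=
  if [pick h | target p q h] is Some h0
  then Some (step p (dprof [arg min_(h < h0 | target p q h) pdist p (dprof h)]))
  else None.

Lemma attack_target p q p' : attack p q = Some p' -> exists h, target p q h.
Proof. by rewrite /attack; case: pickP => // h0 hv0 _; exists h0. Qed.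

Lemma attack_nearest p q h : target p q h -> exists h', [/\ target p q h',
  pdist p (dprof h') <= pdist p (dprof h) & attack p q = Some (step p (dprof h'))].
Proof.
move=> hv; rewrite /attack; case: pickP => [h0 hv0|/(_ h)]; last by rewrite hv.
by case: arg_minnP => // h' hv' hmin; exists h'; split => //; exact: hmin.
Qed.

Lemma attack_close p q p' : attack p q = Some p' -> pdist p p' <= 1.
Proof. by rewrite /attack; case: pickP => // h0 _ [<-]; exact: pdist_step. Qed.

Definition plan (r c : cyl) : cyl :=
  let: (p, z) := r in
  if z == l0 then
    if attack p c.1 is Some p' then (p', l0)
    else if p == far then (ambush c.1, l0) else (p, l1)
  else if z == l1 then (p, l2)
  else if z == l2 then (if p == far then (far, l3) else (step p far, l2))
  else if p == far then (far, l0) else (p, l2).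

Lemma plan_adj r c : adj_or_eq cyl_edge r (plan r c).
Proof.
case: r => p z; rewrite /plan; case: (layer_cases z) => -> /=.
- case hatt: attack => [p'|]; first by rewrite cyl_adjE eqxx (attack_close hatt).
  case: eqP => [->|_]; first by rewrite cyl_adjE eqxx pdist_far_ambush.
  by rewrite cyl_adjE eqxx orbT.
- by rewrite cyl_adjE eqxx orbT.
- case: eqP => [->|_]; first by rewrite cyl_adjE eqxx orbT.
  by rewrite cyl_adjE eqxx pdist_step.
- by case: eqP => [->|_]; rewrite cyl_adjE eqxx orbT.
Qed.

Definition safe (c v : cyl) := ~~ adj_or_eq cyl_edge c v.

Definition evade (r c : cyl) : cyl :=
  let: (p, z) := r in
  if safe c (p, ordS z) then (p, ordS z)
  else if safe c (p, ord_pred z) then (p, ord_pred z) else r.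

Definition robber_move (r c : cyl) : cyl :=
  if safe c (plan r c) then plan r c else evade r c.

Definition robber_start (c : cyl) : cyl := (c.1, ordS (ordS c.2)).

Lemma robber_move_adj r c : adj_or_eq cyl_edge r (robber_move r c).
Proof.
rewrite /robber_move; case: ifP => _; first exact: plan_adj.
case: r => p z; rewrite /evade; case: ifP => _; first by rewrite cyl_adjE eqxx /ladj eqxx orbT.
case: ifP => _; first by rewrite cyl_adjE eqxx /ladj ord_predK eqxx !orbT.
by rewrite /adj_or_eq eqxx.
Qed.

Lemma robber_move_safe r c : c != r -> safe c (robber_move r c).
Proof.
move=> hne; rewrite /robber_move; case: ifP => // _.
case: r hne => p z; rewrite /evade; case: ifP => // /negbFE hu; case: ifP => // /negbFE hd.
case: c hu hd => q w; rewrite /safe !cyl_adjE xpair_eqE.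
case: (eqVneq q p) => [->|_] /=; rewrite ?pdist_xx ?andbF ?orbF /=;
  by case: (layer_cases z) => ->; case: (layer_cases w) => ->.
Qed.

Lemma safe_neq c v : safe c v -> c <> v.
Proof. by rewrite /safe /adj_or_eq => /norP [/eqP]. Qed.

Lemma robber_start_safe c : safe c (robber_start c).
Proof. by case: c => q w; rewrite /safe cyl_adjE eqxx /=; case: (layer_cases w) => ->. Qed.

Lemma ambush_target a a' : d a a' <= 1 -> exists h,
  target (ambush (dprof a)) (dprof a') h /\ pdist (ambush (dprof a)) (dprof h) <= #|VH|.
Proof.
move=> haa'; have [uk huk hlt] := Fballs_miss a'; have hk := Fball_radius_gt0 huk.
have hau : 0 < d a uk.1 by rewrite dC; have := d_tri uk.1 a a'; lia.
have hamb : pdist (ambush (dprof a)) (dprof uk.1) <= uk.2.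
  apply/pdist_leP => x; rewrite ambushE !dprofE.
  have := excess_le x huk; have := dist_le_excess x huk; have := d_tri a x uk.1.
  by rewrite (dC x); lia.
exists uk.1; split; last by have := ltn_ord uk.2; lia.
by rewrite /target dprofE dC; apply: leq_ltn_trans hlt.
Qed.

Lemma safe_l0 a p : 1 < pdist (dprof a) p -> safe (cyl_embed a) (p, l0).
Proof. by rewrite /safe cyl_adjE ladj_irr andbF orbF -ltnNge. Qed.

Lemma safe_l1 a p : p != dprof a -> safe (cyl_embed a) (p, l1).
Proof. by rewrite /safe cyl_adjE /= eq_sym => /negbTE ->. Qed.

Lemma safe_l2 a p : safe (cyl_embed a) (p, l2).
Proof. by rewrite /safe cyl_adjE /= andbF. Qed.

Lemma safe_l3 a p : p != dprof a -> safe (cyl_embed a) (p, l3).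
Proof. by rewrite /safe cyl_adjE /= eq_sym => /negbTE ->. Qed.

Lemma safe_far a : safe (cyl_embed a) (far, l0).
Proof.
by apply: safe_l0; have := leq_pdist_dprof a far; rewrite farE; have := excess_gt0 a; lia.
Qed.

Lemma far_neq a : far != dprof a.
Proof. by apply/eqP => hfa; have := farE a; rewrite hfa dprofE (dist_xx conH). Qed.

Section Play.
Variables (c0 : cyl) (sigma : seq (cyl * cyl) -> cyl).

Fixpoint play (t : nat) : seq (cyl * cyl) :=
  if t is t'.+1 then
    let s := play t' in let c := sigma s in rcons s (c, robber_move (last (c0, c0) s).2 c)
  else [:: (c0, robber_start c0)].

Definition cop t := (last (c0, c0) (play t)).1.
Definition rob t := (last (c0, c0) (play t)).2.

Lemma hist_play t : hist cop rob t = play t.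
Proof. by elim: t => [|t IH] //; rewrite hist_rcons IH /cop /rob /= last_rcons. Qed.

Lemma copS t : cop t.+1 = sigma (hist cop rob t).
Proof. by rewrite hist_play /cop /= last_rcons. Qed.

Lemma robS t : rob t.+1 = robber_move (rob t) (cop t.+1).
Proof. by rewrite /rob /cop /= !last_rcons. Qed.

Lemma rob_plan t v : plan (rob t) (cop t.+1) = v -> safe (cop t.+1) v -> rob t.+1 = v.
Proof. by move=> <- hs; rewrite robS /robber_move hs. Qed.

Lemma rob_survives :
  (forall t, alive_r cop rob t -> adj_or_eq cyl_edge (cop t) (cop t.+1)) ->
  forall t, safe (cop t) (rob t) /\ alive_r cop rob t.
Proof.
move=> cop_adj; elim=> [|t [hs [ha hne]]].
  have hs := robber_start_safe c0; do !split => //; exact: safe_neq.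
have hne1 : cop t.+1 != rob t.
  by apply: contraNneq hs => <-; apply: cop_adj.
have hs1 := robber_move_safe hne1; rewrite -robS in hs1.
split=> //; split; last exact: safe_neq.
by move=> k; rewrite ltnS leq_eqVlt => /orP [/eqP ->|/ha //]; split=> //; apply/eqP.
Qed.

Section Guarded.
Variable T : nat.
Hypothesis cop_on_H : forall t, T <= t -> exists a, cop t = cyl_embed a.
Hypothesis rob_off_H : forall t a, T <= t -> rob t <> cyl_embed a.
Hypothesis cop_step : forall t a b,
  T <= t -> cop t = cyl_embed a -> cop t.+1 = cyl_embed b -> d a b <= 1.

Lemma attack_move t p a h : T <= t -> rob t = (p, l0) -> cop t.+1 = cyl_embed a ->
  target p (dprof a) h -> attack p (dprof a) = Some (step p (dprof h)) ->
  rob t.+1 = (step p (dprof h), l0) /\ 0 < pdist p (dprof h).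
Proof.
move=> hT hr ha hv hatt.
have hpos : 0 < pdist p (dprof h).
  by rewrite lt0n; apply/eqP => /pdist_eq0 hp; apply: (@rob_off_H t h hT); rewrite hr hp.
split=> //; apply: rob_plan; first by rewrite hr ha /plan /= hatt.
rewrite ha; apply: safe_l0; rewrite ltnNge; apply/negP => hle.
have := dist_le_pdist a h; have := pdist_triangle (dprof a) (step p (dprof h)) (dprof h).
by have := pdist_step_target p (dprof h); move: hv; rewrite /target dprofE; lia.
Qed.

(* Nearest targets strictly approach, while the cop, moving by at most one, can
   never make the current target stop being one. *)
Lemma attack_absurd m t p : T <= t -> rob t = (p, l0) ->
  (forall a, cop t.+1 = cyl_embed a -> exists h, target p (dprof a) h /\ pdist p (dprof h) <= m) ->
  False.
Proof.
elim: m t p => [|m IH] t p hT hr hv; have [a ha] := cop_on_H (leqW hT);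
  have [h [hvh hm]] := hv a ha; have [h' [hv' hle hatt]] := attack_nearest hvh;
  have [hr1 hpos] := attack_move hT hr ha hv' hatt; first by lia.
apply: (IH t.+1 (step p (dprof h'))) => // [|a' ha']; first exact: leqW.
exists h'; split; last by have := pdist_step_target p (dprof h'); lia.
have := cop_step (leqW hT) ha ha'; have := d_tri a a' h'.
by have := pdist_step_target p (dprof h'); move: hv'; rewrite /target !dprofE; lia.
Qed.

Lemma attack_available_absurd t p a : T <= t -> rob t = (p, l0) -> cop t.+1 = cyl_embed a ->
  attack p (dprof a) <> None -> False.
Proof.
move=> hT hr ha; case hatt: attack => [p'|] // _; have [h hv] := attack_target hatt.
apply: (attack_absurd (m := pdist p (dprof h)) hT hr) => a' ha'.
have -> : a' = a by apply: cyl_embed_isometric.1; rewrite -ha -ha'.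
by exists h.
Qed.

Lemma far_absurd t : T <= t -> rob t = (far, l0) -> False.
Proof.
move=> hT hr; have [a ha] := cop_on_H (leqW hT).
case hatt: (attack far (dprof a)) => [p'|].
  by apply: attack_available_absurd hT hr ha _; rewrite hatt.
have hr1 : rob t.+1 = (ambush (dprof a), l0).
  apply: rob_plan; first by rewrite hr ha /plan /= hatt eqxx.
  rewrite ha; apply: safe_l0; have := leq_pdist_dprof a (ambush (dprof a)).
  by rewrite ambushE dprofE (dist_xx conH); lia.
apply: (attack_absurd (m := #|VH|) (leqW hT) hr1) => a' ha'.
exact/ambush_target/(cop_step (leqW hT) ha ha').
Qed.

Lemma far_l2_absurd t : T <= t -> rob t = (far, l2) -> False.
Proof.
move=> hT hr; have [a ha] := cop_on_H (leqW hT); have [a' ha'] := cop_on_H (leqW (leqW hT)).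
have hr1 : rob t.+1 = (far, l3).
  by apply: rob_plan; [rewrite hr /plan /= eqxx|rewrite ha; apply/safe_l3/far_neq].
have hr2 : rob t.+2 = (far, l0).
  by apply: rob_plan; [rewrite hr1 /plan /= eqxx|rewrite ha'; apply: safe_far].
exact: far_absurd (leqW (leqW hT)) hr2.
Qed.

Lemma l2_absurd t p : T <= t -> rob t = (p, l2) -> False.
Proof.
move: {2}(pdist p far) (leqnn (pdist p far)) => n; elim: n t p => [|n IH] t p hn hT hr.
  by move: hn hr; rewrite leqn0 => /eqP /pdist_eq0 ->; apply: far_l2_absurd.
have [hp|hp] := eqVneq p far; first by rewrite hp in hr; exact: far_l2_absurd hT hr.
have [a ha] := cop_on_H (leqW hT).
have hr1 : rob t.+1 = (step p far, l2).
  by apply: rob_plan; [rewrite hr /plan /= (negbTE hp)|rewrite ha; apply: safe_l2].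
by apply: IH (leqW hT) hr1; have := pdist_step_target p far; lia.
Qed.

Lemma l3_absurd t p : T <= t -> rob t = (p, l3) -> False.
Proof.
move=> hT hr; have [a ha] := cop_on_H (leqW hT); have [hp|hp] := eqVneq p far.
  rewrite hp in hr.
  have hr1 : rob t.+1 = (far, l0).
    by apply: rob_plan; [rewrite hr /plan /= eqxx|rewrite ha; apply: safe_far].
  exact: far_absurd (leqW hT) hr1.
have hr1 : rob t.+1 = (p, l2).
  by apply: rob_plan; [rewrite hr /plan /= (negbTE hp)|rewrite ha; apply: safe_l2].
exact: l2_absurd (leqW hT) hr1.
Qed.

Lemma l1_absurd t p : T <= t -> rob t = (p, l1) -> False.
Proof.
move=> hT hr; have [a ha] := cop_on_H (leqW hT).
have hr1 : rob t.+1 = (p, l2) by apply: rob_plan; [rewrite hr|rewrite ha; apply: safe_l2].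
exact: l2_absurd (leqW hT) hr1.
Qed.

Lemma l0_absurd t p : T <= t -> rob t = (p, l0) -> False.
Proof.
move=> hT hr; have [a ha] := cop_on_H (leqW hT).
case hatt: (attack p (dprof a)) => [p'|].
  by apply: attack_available_absurd hT hr ha _; rewrite hatt.
have [hp|hp] := eqVneq p far; first by rewrite hp in hr; exact: far_absurd hT hr.
have hr1 : rob t.+1 = (p, l1).
  apply: rob_plan; first by rewrite hr ha /plan /= hatt (negbTE hp).
  rewrite ha; apply: safe_l1; apply/eqP => hpa.
  by apply: (@rob_off_H t a hT); rewrite hr hpa.
exact: l1_absurd (leqW hT) hr1.
Qed.

Lemma guarded_absurd : False.
Proof.
case hr: (rob T) => [p z].
by case: (layer_cases z) => hz; rewrite hz in hr;
  [exact: l0_absurd hr|exact: l1_absurd hr|exact: l2_absurd hr|exact: l3_absurd hr].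
Qed.

End Guarded.
End Play.

Lemma cyl_not_guardable : ~ guardable1 cyl_edge [set cyl_embed x | x in VH].
Proof.
case=> c0 [sigma guard].
have radj t : adj_or_eq cyl_edge (rob c0 sigma t) (rob c0 sigma t.+1).
  by rewrite robS; apply: robber_move_adj.
have [cop_adj [T hT]] := guard (cop c0 sigma) (rob c0 sigma) (erefl _) (copS c0 sigma) radj.
have alive := rob_survives cop_adj.
apply: (guarded_absurd (c0 := c0) (sigma := sigma) (T := T))
  => [t hTt|t a hTt hra|t a b hTt ha hb].
- by have /imsetP [a _] := (hT t hTt).1 (alive t).2.1; exists a.
- apply: ((alive t.+1).2.1 t (ltnSn t)).2; move: ((hT t hTt).2 (alive t).2); apply.
  by rewrite hra imset_f.
- have := cop_adj t (alive t).2; rewrite ha hb cyl_adjE eqxx ladj_irr andbF orbF /=.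
  exact: leq_trans (dist_le_pdist a b).
Qed.

End Family.

Lemma guardable1_helly :
  (forall (VG : finType) (eG : rel VG) (f : VH -> VG),
      connected_graph eG -> isometric_embedding eH eG f ->
      guardable1 eG [set f x | x in VH]) ->
  helly eH.
Proof.
move=> guard F F_balls F_meet.
have [/existsP [x /forallP hx]|hnone] := boolP [exists x, [forall B in F, x \in B]].
  by exists x => B hB; have := hx B; rewrite hB.
have F_not_helly x : exists2 B, B \in F & x \notin B.
  move: hnone; rewrite negb_exists => /forallP /(_ x); rewrite negb_forall => /existsP [B].
  by rewrite negb_imply => /andP [hB hxB]; exists B.
case: (cyl_not_guardable F_balls F_meet F_not_helly).
exact: guard _ _ _ cyl_connected cyl_embed_isometric.
Qed.

End NonHelly.

Theorem theorem2p5 (VH : finType) (eH : rel VH) (HH : connected_graph eH) :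
  (forall (VG : finType) (eG : rel VG) (f : VH -> VG),
      connected_graph eG -> isometric_embedding eH eG f ->
      guardable1 eG [set f x | x in VH])
  <-> helly eH.
Proof.
split; first exact: guardable1_helly.
move=> hH VG eG f HG Hf; have /card_gt0P [x0 _] := HH.2.1.
exact: helly_guardable1 HG Hf hH x0.
Qed.
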